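(* For every hypergraph $H$ with $n\ge1$ vertices, $\mathrm{ch}_{cf}(H)\le\chi_{cf}(H)\cdot\ln n+1$.
   Context: A coloring $C\colon V\to\mathbb Z_{>0}$ of a hypergraph $H=(V,\mathcal E)$ (nonempty hyperedges) is conflict-free if every hyperedge contains a vertex whose color appears exactly once in it. $\chi_{cf}(H)$ is the minimum number of colors in a conflict-free coloring of $H$. $\mathrm{ch}_{cf}(H)$ is the minimum $k$ such that for every family $\{L_v\}_{v\in V}$ of sets of positive integers with $|L_v|\ge k$ there is a conflict-free coloring $C$ with $C(v)\in L_v$ for all $v$. *)

From mathcomp Require Import all_boot.
From Stdlib Require Import ClassicalEpsilon.
Set Implicit Arguments. Unset Strict Implicit. Unset Printing Implicit Defensive.

Definition hyperedges_nonempty (V : finType) (E : {set {set V}}) : Prop :=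
  forall e, e \in E -> e != set0.

Definition conflict_free (V : finType) (E : {set {set V}}) (C : V -> nat) : Prop :=
  forall e, e \in E ->
    exists2 v, v \in e & forall u, u \in e -> C u = C v -> u = v.

(* Least natural number satisfying P (classically chosen; arbitrary if none). *)
Definition least_nat (P : nat -> Prop) : nat :=
  epsilon (inhabits 0%N) (fun k => P k /\ forall j, P j -> (k <= j)%N).

Definition cf_colorable (V : finType) (E : {set {set V}}) (k : nat) : Prop :=
  exists C : V -> nat, (forall v, 0 < C v <= k)%N /\ conflict_free E C.

Definition chi_cf (V : finType) (E : {set {set V}}) : nat :=
  least_nat (cf_colorable E).

Definition cf_choosable (V : finType) (E : {set {set V}}) (k : nat) : Prop :=
  forall L : V -> seq nat,
    (forall v, uniq (L v) /\ (k <= size (L v))%N /\ all (fun c => 0 < c)%N (L v)) ->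
    exists C : V -> nat, (forall v, C v \in L v) /\ conflict_free E C.

Definition ch_cf (V : finType) (E : {set {set V}}) : nat :=
  least_nat (cf_choosable E).

From mathcomp Require Import all_boot.
From Stdlib Require Import Classical ClassicalEpsilon.
Set Implicit Arguments. Unset Strict Implicit. Unset Printing Implicit Defensive.

(* Let C be a conflict-free colouring with k+1 colours and let every list have
   l > (k+1) ln n entries.  Send each colour occurring in some list to one of
   the k+1 classes of C, uniformly at random.  A vertex v is missed if no colour
   of L v lands in the class C v; this has probability
   (k/(k+1))^l <= e^(-l/(k+1)) < 1/n, so by the union bound some map f misses
   no vertex.  Choosing for each v a colour of L v that f sends to C v yields a
   list colouring which refines C, hence is conflict-free.  The probabilistic
   step is carried out by counting. *)

Lemma conflict_free_refine (V : finType) (E : {set {set V}})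
    (C C' : V -> nat) :
  (forall u v, C' u = C' v -> C u = C v) ->
  conflict_free E C -> conflict_free E C'.
Proof.
move=> refC cfC e /cfC [v ve uniq_v].
by exists v => // u ue /refC; apply: uniq_v.
Qed.

Lemma leq_card_bigcup (I : Type) (T : finType) (r : seq I) (P : pred I)
    (F : I -> {set T}) :
  #|\bigcup_(i <- r | P i) F i| <= \sum_(i <- r | P i) #|F i|.
Proof.
apply: (big_ind2 (fun (B : {set T}) n => #|B| <= n))
  => [|B1 n1 B2 n2 le1 le2|//].
- by rewrite cards0.
- exact: leq_trans (leq_card_setU _ _) (leq_add le1 le2).
Qed.

Lemma card_ffun_avoid (D : finType) (k : nat) (S : {set D}) (c : 'I_k.+1) :
  #|[set f : {ffun D -> 'I_k.+1} | [forall x in S, f x != c]]|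
    = k ^ #|S| * k.+1 ^ #|~: S|.
Proof.
pose F x : pred 'I_k.+1 := if x \in S then predC1 c else predT.
have -> : [set f : {ffun D -> 'I_k.+1} | [forall x in S, f x != c]]
          = [set f in family F].
  apply/setP => f; rewrite !inE.
  apply/forall_inP/familyP => [avoid x | inF x xS].
  - by rewrite /F; case: ifP => // /avoid.
  - by have := inF x; rewrite /F xS.
rewrite cardsE card_family foldrE big_map big_enum (bigID [in S]) /=.
rewrite (eq_bigr (fun=> k)) => [|x xS]; last by rewrite /F xS cardC1 card_ord.
rewrite [X in _ * X](eq_bigr (fun=> k.+1)) => [|x xS]; last first.
  by rewrite /F (negbTE xS) card_ord.
rewrite !prod_nat_const; congr (_ ^ _ * _ ^ _).
by apply: eq_card => x; rewrite !inE.
Qed.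

Lemma leq_expn_ratio (k l s r : nat) : l <= s ->
  k ^ s * k.+1 ^ r * k.+1 ^ l <= k ^ l * k.+1 ^ (s + r).
Proof.
move=> /subnKC <-; set d := s - l.
rewrite -addnA !expnD -!mulnA leq_mul2l; apply/orP; right.
rewrite [X in _ <= X]mulnCA [k.+1 ^ r * _]mulnC leq_mul //.
by case: d => [//|d]; rewrite leq_exp2r.
Qed.

Lemma exists_ffun_hitting (I D : finType) (k l : nat) (S : I -> {set D})
    (t : I -> 'I_k.+1) :
  (forall i, l <= #|S i|) -> #|I| * k ^ l < k.+1 ^ l ->
  exists f : {ffun D -> 'I_k.+1}, forall i, exists2 x, x \in S i & f x = t i.
Proof.
move=> largeS fewI.
pose bad i := [set f : {ffun D -> 'I_k.+1} | [forall x in S i, f x != t i]].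
have bad_small i : #|bad i| * k.+1 ^ l <= k ^ l * k.+1 ^ #|D|.
  by rewrite card_ffun_avoid -(cardsC (S i)) leq_expn_ratio.
have few_bad : #|\bigcup_i bad i| < #|{ffun D -> 'I_k.+1}|.
  rewrite card_ffun card_ord -(ltn_pmul2r (expn_gt0 k.+1 l)).
  apply: leq_ltn_trans (_ : #|I| * (k ^ l * k.+1 ^ #|D|) < _).
    apply: (leq_trans (leq_mul (leq_card_bigcup _ _ _) (leqnn _))).
    by rewrite big_distrl -sum_nat_const leq_sum.
  by rewrite mulnA mulnC ltn_pmul2l ?expn_gt0.
have [f] : exists f, f \in ~: \bigcup_i bad i.
  by apply/card_gt0P; rewrite -(ltn_add2l #|\bigcup_i bad i|) addn0 cardsC.
rewrite inE => /bigcupP f_good; exists f => i.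
have : f \notin bad i by apply/negP => f_bad; apply: f_good; exists i.
by rewrite inE => /forall_inPn [x xS /negPn /eqP fx]; exists x.
Qed.

Lemma card_ord_mem_seq (N : nat) (s : seq nat) : uniq s ->
  #|[set x : 'I_N | val x \in s]| = count (fun c => c < N) s.
Proof.
move=> s_uniq; rewrite -(size_pmap_sub 'I_N) -(card_uniqP _).
  by apply: eq_card => x; rewrite inE mem_pmap_sub.
exact: pmap_sub_uniq.
Qed.

Lemma exists_bound_seq (V : finType) (L : V -> seq nat) :
  exists N, forall v c, c \in L v -> c < N.
Proof.
exists (\max_v \max_(c <- L v) c).+1 => v c cL; rewrite ltnS.
apply: leq_trans (leq_bigmax v).
exact: (leq_bigmax_seq (F := id) c cL).
Qed.

Lemma cf_choosable_of_colorable (V : finType) (E : {set {set V}}) (k l : nat) :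
  cf_colorable E k.+1 -> #|V| * k ^ l < k.+1 ^ l -> cf_choosable E l.
Proof.
move=> [C [C_range cfC]] fewV L L_ok.
have [N L_lt_N] := exists_bound_seq L.
pose S v := [set x : 'I_N | val x \in L v].
pose t v : 'I_k.+1 := inord (C v).-1.
have C_t v : C v = (t v).+1.
  by case/andP: (C_range v) => C_pos C_le; rewrite inordK ?prednK.
have large_S v : l <= #|S v|.
  have [L_uniq [L_large _]] := L_ok v.
  rewrite card_ord_mem_seq // (eq_in_count (a2 := predT)) ?count_predT //.
  exact: L_lt_N.
have [f hit] := exists_ffun_hitting t large_S fewV.
have hit_pick v : exists x, (x \in S v) && (f x == t v).
  by have [x xS fx] := hit v; exists x; rewrite xS fx eqxx.
pose pick v := xchoose (hit_pick v).
have [pick_S f_pick] :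
    (forall v, pick v \in S v) /\ (forall v, f (pick v) = t v).
  by split=> v; have /andP[? /eqP ?] := xchooseP (hit_pick v).
exists (fun v => val (pick v)); split=> [v|].
  by have := pick_S v; rewrite inE.
apply: conflict_free_refine cfC => u v /val_inj eq_pick.
by rewrite !C_t -!f_pick eq_pick.
Qed.

Lemma cf_colorable_card (V : finType) (E : {set {set V}}) :
  hyperedges_nonempty E -> cf_colorable E #|V|.
Proof.
move=> E_ne; exists (fun v => (enum_rank v).+1).
split=> [v|e /E_ne /set0Pn [v ve]]; first exact: ltn_ord.
by exists v => // u _ [/val_inj /enum_rank_inj].
Qed.

Lemma cf_colorable_gt0 (V : finType) (E : {set {set V}}) (k : nat) :
  0 < #|V| -> cf_colorable E k -> 0 < k.
Proof. by case/card_gt0P=> v _ [C [/(_ v) /andP[/leq_trans C_pos /C_pos]]]. Qed.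

Lemma least_nat_spec (P : nat -> Prop) (n : nat) :
  P n -> P (least_nat P) /\ least_nat P <= n.
Proof.
move=> Pn; have least_ex : exists k, P k /\ forall j, P j -> k <= j.
  elim/ltn_ind: n Pn => n IH Pn.
  have [[j [Pj lt_jn]] | no_smaller] := classic (exists j, P j /\ j < n).
    exact: IH Pj.
  exists n; split=> // j Pj; rewrite leqNgt; apply/negP => lt_jn.
  by apply: no_smaller; exists j.
have [Pl l_min] := epsilon_spec (inhabits 0) _ least_ex.
by split; last exact: l_min.
Qed.

(* Reals is imported only now because it rebinds [^] in [nat_scope] to
   [Nat.pow]; from here on natural powers are written [expn]. *)
From Stdlib Require Import Reals Lra.

Lemma INR_expn (m n : nat) : INR (expn m n) = (INR m ^ n)%R.
Proof. by elim: n => [//|n IH]; rewrite expnS mulnE mult_INR IH. Qed.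

Lemma exp_pow (x : R) (l : nat) : (exp x ^ l = exp (INR l * x))%R.
Proof.
elim: l => [|l IH]; first by rewrite /= Rmult_0_l exp_0.
by rewrite S_INR Rmult_plus_distr_r Rmult_1_l exp_plus -IH /= Rmult_comm.
Qed.

Lemma pow_le_exp_ratio (k l : nat) :
  (INR k ^ l <= INR k.+1 ^ l * exp (- (INR l / INR k.+1)))%R.
Proof.
have K_pos : (0 < INR k.+1)%R by apply: lt_0_INR; apply/ltP.
have k_ge0 := pos_INR k.
have ratio_le : (INR k / INR k.+1 <= exp (- / INR k.+1))%R.
  have -> : (INR k / INR k.+1 = 1 + - / INR k.+1)%R.
    by rewrite S_INR; field; lra.
  exact: exp_ineq1_le.
have -> : (INR k = INR k.+1 * (INR k / INR k.+1))%R by field; lra.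
rewrite Rpow_mult_distr; apply: Rmult_le_compat_l; first by apply: pow_le; lra.
rewrite [in X in (_ <= X)%R]/Rdiv Ropp_mult_distr_r -exp_pow.
apply: pow_incr; split=> //.
by apply: Rmult_le_pos => //; apply: Rlt_le; apply: Rinv_0_lt_compat.
Qed.

Lemma ltn_expn_ratio (n k l : nat) : (0 < n)%N ->
  (INR k.+1 * ln (INR n) < INR l)%R -> (n * expn k l < expn k.+1 l)%N.
Proof.
move=> n_pos lt_l; apply/ltP; apply: INR_lt.
have n_posR : (0 < INR n)%R by apply: lt_0_INR; apply/ltP.
have K_pos : (0 < INR k.+1)%R by apply: lt_0_INR; apply/ltP.
have exp_lt : (exp (- (INR l / INR k.+1)) < / INR n)%R.
  rewrite -(exp_ln (INR n)) // -exp_Ropp; apply: exp_increasing.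
  apply: Ropp_lt_contravar; apply: (Rmult_lt_reg_l (INR k.+1)) => //.
  by have -> : (INR k.+1 * (INR l / INR k.+1) = INR l)%R by field; lra.
rewrite mulnE mult_INR !INR_expn.
have KL_pos : (0 < INR k.+1 ^ l)%R by apply: pow_lt.
apply: (Rle_lt_trans _ (INR n * (INR k.+1 ^ l * exp (- (INR l / INR k.+1))))).
  by apply: Rmult_le_compat_l; [lra | apply: pow_le_exp_ratio].
apply: (Rlt_le_trans _ (INR n * (INR k.+1 ^ l * / INR n))).
  by apply: Rmult_lt_compat_l => //; apply: Rmult_lt_compat_l.
by right; field; lra.
Qed.

Lemma exists_nat_between (x : R) : (0 <= x)%R ->
  exists l : nat, (x < INR l <= x + 1)%R.
Proof.
move=> x_ge0; have [up_gt up_le] := archimed x.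
exists (Z.to_nat (up x)); rewrite INR_IZR_INZ Znat.Z2Nat.id; first lra.
by apply: le_0_IZR; lra.
Qed.

Lemma ln_INR_ge0 (n : nat) : (0 < n)%N -> (0 <= ln (INR n))%R.
Proof.
move=> n_pos.
have n_ge1 : (1 <= INR n)%R by apply: (le_INR 1); apply/leP.
rewrite -ln_1; apply: Rnot_lt_le => /ln_lt_inv lt_n1.
by have := lt_n1 ltac:(lra) Rlt_0_1; lra.
Qed.

Theorem corollary6p3 (V : finType) (E : {set {set V}}) :
  hyperedges_nonempty E -> (1 <= #|V|)%N ->
  (INR (ch_cf E) <= INR (chi_cf E) * ln (INR #|V|) + 1)%R.
Proof.
move=> E_ne V_pos.
have [chi_col _] := least_nat_spec (cf_colorable_card E_ne).
rewrite -/(chi_cf E) in chi_col.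
have [k chi_eq] : exists k, chi_cf E = k.+1.
  by exists (chi_cf E).-1; rewrite prednK // (cf_colorable_gt0 V_pos chi_col).
rewrite chi_eq in chi_col *.
have ln_ge0 : (0 <= INR k.+1 * ln (INR #|V|))%R.
  by apply: Rmult_le_pos; [apply: pos_INR | apply: ln_INR_ge0].
have [l [lt_l le_l]] := exists_nat_between ln_ge0.
have l_choosable :=
  cf_choosable_of_colorable chi_col (ltn_expn_ratio V_pos lt_l).
have [_ ch_le] := least_nat_spec l_choosable.
by apply: Rle_trans le_l; apply: le_INR; apply/leP.
Qed.
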